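(* Let $P$ be a well-behaved set of vincular patterns and $n\ge1$. Let $\equiv$ be the equivalence relation on $S_n$ generated by the following rewriting rule. Whenever $\pi\in S_n$ contains an occurrence of some $\tau\in P$ with entries $x_1,\dots,x_k$ (appearing in this left-to-right order in $\pi$, in the same relative order as $\tau$), where the pair $x_ix_{i+1}$ matched to the underlined pair $\underline{k1}$ of $\tau$ occupies adjacent positions in $\pi$, then $\pi\equiv\pi'$, where $\pi'$ is obtained from $\pi$ by swapping the adjacent entries $x_i$ and $x_{i+1}$. Then: - $\equiv$ is a lattice congruence of the weak order on $S_n$; - every equivalence class of $\equiv$ contains exactly one permutation avoiding every pattern in $P$, and this permutation is the minimum of its class.
   Context: $S_n$ is the set of permutations of $[n]$ with the weak order (inclusion of inversion sets $\{(a_i,a_j):i<j,\ a_i>a_j\}$). A lattice congruence is an equivalence relation compatible with joins and meets. Vincular patterns. A vincular pattern is a permutation $\tau\in S_k$ with one underlined pair of consecutive entries. A permutation $\pi$ contains $\tau$ if it has a subsequence whose entries are in the same relative order as $\tau$ and in which the two entries matched to the underlined pair are at adjacent positions of $\pi$; otherwise $\pi$ avoids $\tau$. Well-behaved sets. A set $P$ of vincular patterns is well-behaved if each $\tau\in P$, of length $k\ge2$, has the form $\tau=A\,\underline{k1}\,B$ with $AB$ a permutation of $\{2,\dots,k-1\}$, and every pattern obtained from $\tau$ by permuting the entries within $A$ and within $B$ also lies in $P$. *)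

From mathcomp Require Import all_boot.
Set Implicit Arguments. Unset Strict Implicit. Unset Printing Implicit Defensive.

Definition is_perm (n : nat) (s : seq nat) : Prop := perm_eq s (iota 1 n).

Definition inversion (s : seq nat) (a b : nat) : Prop :=
  [/\ a \in s, b \in s, b < a & index a s < index b s].

Definition weak_le (s t : seq nat) : Prop :=
  forall a b, inversion s a b -> inversion t a b.

Definition is_join (n : nat) (x y j : seq nat) : Prop :=
  [/\ is_perm n j, weak_le x j, weak_le y j &
      forall u, is_perm n u -> weak_le x u -> weak_le y u -> weak_le j u].
Definition is_meet (n : nat) (x y m : seq nat) : Prop :=
  [/\ is_perm n m, weak_le m x, weak_le m y &
      forall u, is_perm n u -> weak_le u x -> weak_le u y -> weak_le u m].

Definition lattice_congruence (n : nat) (R : seq nat -> seq nat -> Prop) : Prop :=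
  [/\ (forall x, is_perm n x -> R x x),
      (forall x y, is_perm n x -> is_perm n y -> R x y -> R y x),
      (forall x y z, is_perm n x -> is_perm n y -> is_perm n z ->
           R x y -> R y z -> R x z),
      (forall x x' y j j', is_perm n x -> is_perm n x' -> is_perm n y ->
           R x x' -> is_join n x y j -> is_join n x' y j' -> R j j') &
      (forall x x' y m m', is_perm n x -> is_perm n x' -> is_perm n y ->
           R x x' -> is_meet n x y m -> is_meet n x' y m' -> R m m')].

(* A vincular pattern: (tau, i) with tau a permutation of [k] and the
   underlined pair at the (0-based) consecutive positions i, i+1. *)
Definition vpattern := (seq nat * nat)%type.

Definition is_vpattern (p : vpattern) : Prop :=
  is_perm (size p.1) p.1 /\ p.2.+1 < size p.1.

(* idx (strictly increasing positions, 0-based) is an occurrence of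
   the vincular pattern (tau, i) in s. *)
Definition occurrence (s : seq nat) (p : vpattern) (idx : seq nat) : Prop :=
  [/\ size idx = size p.1,
      sorted ltn idx,
      all (fun q => q < size s) idx,
      (forall a b, a < size p.1 -> b < size p.1 ->
         (nth 0 s (nth 0 idx a) < nth 0 s (nth 0 idx b)) =
         (nth 0 p.1 a < nth 0 p.1 b)) &
      nth 0 idx p.2.+1 = (nth 0 idx p.2).+1].

Definition contains (s : seq nat) (p : vpattern) : Prop :=
  exists idx, occurrence s p idx.

Definition avoids_all (P : vpattern -> Prop) (s : seq nat) : Prop :=
  forall p, P p -> ~ contains s p.

Definition well_behaved (P : vpattern -> Prop) : Prop :=
  forall tau i, P (tau, i) ->
    let k := size tau in
    [/\ is_vpattern (tau, i), 2 <= k,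
        nth 0 tau i = k, nth 0 tau i.+1 = 1 &
        forall A' B', perm_eq A' (take i tau) -> perm_eq B' (drop i.+2 tau) ->
          P (A' ++ k :: 1 :: B', i)].

Definition swap_adj (s : seq nat) (q : nat) : seq nat :=
  set_nth 0 (set_nth 0 s q (nth 0 s q.+1)) q.+1 (nth 0 s q).

Definition rewrite_step (P : vpattern -> Prop) (n : nat) (s t : seq nat) : Prop :=
  is_perm n s /\
  exists p idx, [/\ P p, occurrence s p idx & t = swap_adj s (nth 0 idx p.2)].

Inductive gen_equiv (R : seq nat -> seq nat -> Prop) : seq nat -> seq nat -> Prop :=
| ge_step x y : R x y -> gen_equiv R x y
| ge_refl x : gen_equiv R x x
| ge_sym x y : gen_equiv R x y -> gen_equiv R y x
| ge_trans x y z : gen_equiv R x y -> gen_equiv R y z -> gen_equiv R x z.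

From mathcomp Require Import all_boot zify.
From Stdlib Require Import Classical.
Set Implicit Arguments. Unset Strict Implicit. Unset Printing Implicit Defensive.

(* Say that a descent of s at positions q, q+1 is swappable when some
   occurrence of a pattern of P has its underlined pair there; the rewriting
   step swaps such a descent, and so strictly shrinks the inversion set.
   Well-behavedness makes swappability stable under widening the descent
   (larger top, smaller bottom) as long as the values strictly between keep
   their side.  This one property yields local confluence (the overlapping
   cases are settled inside a window of three entries), hence unique normal
   forms, and monotonicity of the normal-form map in the weak order; so the
   normal form is the minimum of its class, the unique avoider in it, and the
   classes are compatible with meets.  Reversing all permutations swaps joins
   and meets and turns the swappable descents into a dual family with the
   same stability property, which gives compatibility with joins. *)

Lemma is_perm_uniq n (s : seq nat) : is_perm n s -> uniq s.
Proof. by move=> hs; rewrite (perm_uniq hs) iota_uniq. Qed.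

Lemma is_perm_size n (s : seq nat) : is_perm n s -> size s = n.
Proof. by move=> hs; rewrite (perm_size hs) size_iota. Qed.

Lemma is_perm_mem n (s : seq nat) v : is_perm n s -> (v \in s) = (0 < v <= n).
Proof. by move=> hs; rewrite (perm_mem hs) mem_iota; lia. Qed.

Lemma is_perm_memE n (s t : seq nat) : is_perm n s -> is_perm n t -> s =i t.
Proof. by move=> hs ht; apply: perm_mem; rewrite (perm_trans hs) // perm_sym. Qed.

Lemma is_perm_rev n (s : seq nat) : is_perm n s -> is_perm n (rev s).
Proof. by rewrite /is_perm perm_rev. Qed.

Lemma index_neq_nth (s : seq nat) v q : q < size s -> v != nth 0 s q -> index v s != q.
Proof.
move=> hq hv; apply/eqP=> e; move: hv.
by rewrite -e nth_index ?eqxx // -index_mem e.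
Qed.

Lemma index_inj_neq (s : seq nat) a b : a \in s -> b \in s -> a != b ->
  index a s != index b s.
Proof. by move=> ha hb; apply: contra => /eqP/(index_inj 0 ha hb)->. Qed.

Lemma in_drop_uniq (s : seq nat) v m : uniq s -> v \in s ->
  (v \in drop m s) = (m <= index v s).
Proof.
move=> us vs; have := count_uniq_mem v (drop_uniq m us).
have := count_uniq_mem v (take_uniq m us); rewrite in_take //.
have := count_cat (pred1 v) (take m s) (drop m s); rewrite cat_take_drop count_uniq_mem // vs.
by case: (v \in drop m s); case: ltnP => /=; lia.
Qed.

Lemma map_index_nth (w t : seq nat) : uniq w -> size w = size t ->
  [seq nth 0 t (index v w) | v <- w] = t.
Proof.
move=> uw hs; apply: (@eq_from_nth _ 0); first by rewrite size_map.
by move=> j; rewrite size_map => hj; rewrite (nth_map 0) // index_uniq.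
Qed.

Definition adj_transp q i := if i == q then q.+1 else if i == q.+1 then q else i.

Variant adj_transp_spec q i : nat -> Type :=
  | AdjTranspLeft of i = q : adj_transp_spec q i q.+1
  | AdjTranspRight of i = q.+1 : adj_transp_spec q i q
  | AdjTranspFixed of i <> q & i <> q.+1 : adj_transp_spec q i i.

Lemma adj_transpP q i : adj_transp_spec q i (adj_transp q i).
Proof.
rewrite /adj_transp; case: eqP => [->|nq]; first exact: AdjTranspLeft.
by case: eqP => [->|nq1]; [apply: AdjTranspRight | apply: AdjTranspFixed].
Qed.

Lemma adj_transpK q : involutive (adj_transp q).
Proof. by move=> i; case: (adj_transpP q i) => [->|->|? ?]; case: adj_transpP; lia. Qed.

Lemma adj_transp_lt q i j : (i, j) != (q, q.+1) -> (i, j) != (q.+1, q) ->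
  (adj_transp q i < adj_transp q j) = (i < j).
Proof. by rewrite !xpair_eqE; do 2!case: adj_transpP; lia. Qed.

Lemma size_swap_adj (s : seq nat) q : q.+1 < size s -> size (swap_adj s q) = size s.
Proof. by move=> hq; rewrite /swap_adj !size_set_nth; lia. Qed.

Lemma nth_swap_adj (s : seq nat) q j : q.+1 < size s ->
  nth 0 (swap_adj s q) j = nth 0 s (adj_transp q j).
Proof.
move=> hq; rewrite /swap_adj /adj_transp !nth_set_nth /= !nth_set_nth /=.
by do !case: eqP => ? //; subst => //; lia.
Qed.

Lemma swap_adjK (s : seq nat) q : q.+1 < size s -> swap_adj (swap_adj s q) q = s.
Proof.
move=> hq; apply: (@eq_from_nth _ 0); rewrite !size_swap_adj // => j _.
by rewrite !nth_swap_adj ?size_swap_adj // adj_transpK.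
Qed.

Lemma swap_adjC (s : seq nat) q r : q.+1 < r -> r.+1 < size s ->
  swap_adj (swap_adj s q) r = swap_adj (swap_adj s r) q.
Proof.
move=> hqr hr; have hq : q.+1 < size s by lia.
apply: (@eq_from_nth _ 0); rewrite !size_swap_adj // => j _.
rewrite !nth_swap_adj ?size_swap_adj //; congr nth.
by case: (adj_transpP q j); case: (adj_transpP r j); do !case: adj_transpP; lia.
Qed.

Lemma swap_adj_cat (L w R : seq nat) j : j.+1 < size w ->
  swap_adj (L ++ w ++ R) (size L + j) = L ++ swap_adj w j ++ R.
Proof.
move=> hj; have hs : (size L + j).+1 < size (L ++ w ++ R) by rewrite !size_cat; lia.
apply: (@eq_from_nth _ 0); first by rewrite size_swap_adj // !size_cat size_swap_adj.
move=> i _; rewrite nth_swap_adj // !nth_cat size_swap_adj // nth_swap_adj //.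
case: (adj_transpP (size L + j) i) => [->|->|? ?]; case: adj_transpP => [?|?|? ?];
  do ?case: ltnP => ?; try lia; congr nth; lia.
Qed.

Lemma nth_cat_window (L w R : seq nat) j : j < size w ->
  nth 0 (L ++ w ++ R) (size L + j) = nth 0 w j.
Proof. by move=> hj; rewrite nth_cat ltnNge leq_addr /= addKn nth_cat hj. Qed.

Lemma cat_take_window2 (s : seq nat) q : q.+1 < size s ->
  s = take q s ++ [:: nth 0 s q; nth 0 s q.+1] ++ drop q.+2 s.
Proof. by move=> hq; rewrite /= -!drop_nth ?cat_take_drop //; lia. Qed.

Lemma window3 (s : seq nat) q : q.+2 < size s ->
  exists L R x y z, [/\ s = L ++ [:: x; y; z] ++ R, size L = q,
    nth 0 s q = x, nth 0 s q.+1 = y & nth 0 s q.+2 = z].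
Proof.
move=> hq; exists (take q s), (drop q.+3 s), (nth 0 s q), (nth 0 s q.+1), (nth 0 s q.+2).
by split; rewrite // ?size_takel /= -?drop_nth ?cat_take_drop //; lia.
Qed.

Lemma swap_adj_cat3l (L R : seq nat) x y z :
  swap_adj (L ++ [:: x; y; z] ++ R) (size L) = L ++ [:: y; x; z] ++ R.
Proof. by rewrite -[size L]addn0 swap_adj_cat. Qed.

Lemma swap_adj_cat3r (L R : seq nat) x y z :
  swap_adj (L ++ [:: x; y; z] ++ R) (size L).+1 = L ++ [:: x; z; y] ++ R.
Proof. by rewrite -addn1 swap_adj_cat. Qed.

Lemma nth_cat3 (L R : seq nat) x y z :
  [/\ nth 0 (L ++ [:: x; y; z] ++ R) (size L) = x,
      nth 0 (L ++ [:: x; y; z] ++ R) (size L).+1 = y &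
      nth 0 (L ++ [:: x; y; z] ++ R) (size L).+2 = z].
Proof.
by split; [rewrite -[size L]addn0 | rewrite -addn1 | rewrite -addn2]; rewrite nth_cat_window.
Qed.

Lemma perm_swap_adj (s : seq nat) q : q.+1 < size s -> perm_eq (swap_adj s q) s.
Proof.
move=> hq; have hL : size (take q s) = q by rewrite size_takel; lia.
move: (cat_take_window2 hq) hL; set L := take q s; set R := drop q.+2 s => e hL.
rewrite {1 2}e -[in X in swap_adj _ X]hL -[size L]addn0 swap_adj_cat //.
by rewrite perm_cat2l perm_cat2r /swap_adj /= (perm_catC [:: _] [:: _]).
Qed.

Lemma is_perm_swap_adj n (s : seq nat) q : is_perm n s -> q.+1 < n ->
  is_perm n (swap_adj s q).
Proof.
by move=> hs hq; rewrite /is_perm (perm_trans (perm_swap_adj _)) // (is_perm_size hs).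
Qed.

Lemma index_swap_adj (s : seq nat) q v : uniq s -> q.+1 < size s ->
  index v (swap_adj s q) = adj_transp q (index v s).
Proof.
move=> us hq; have ut : uniq (swap_adj s q) by rewrite (perm_uniq (perm_swap_adj hq)).
have [vs|vs] := boolP (v \in s).
  have hi : index v s < size s by rewrite index_mem.
  have {1}-> : v = nth 0 (swap_adj s q) (adj_transp q (index v s)).
    by rewrite nth_swap_adj // adj_transpK nth_index.
  by rewrite index_uniq ?size_swap_adj //; case: adj_transpP; lia.
have vt : v \notin swap_adj s q by rewrite (perm_mem (perm_swap_adj hq)).
have -> : index v (swap_adj s q) = size s by rewrite memNindex // size_swap_adj.
have -> : index v s = size s by rewrite memNindex.
by case: adj_transpP => [||_ _ //]; lia.
Qed.

Lemma rev_swap_adj (s : seq nat) q : q.+1 < size s ->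
  rev (swap_adj s q) = swap_adj (rev s) (size s - q.+2).
Proof.
move=> hq; apply: (@eq_from_nth _ 0); first by rewrite size_rev !size_swap_adj ?size_rev; lia.
move=> j; rewrite size_rev size_swap_adj // => hj.
rewrite nth_rev ?size_swap_adj // !nth_swap_adj ?size_rev; try lia.
by rewrite nth_rev; [congr nth|]; do !case: adj_transpP; lia.
Qed.

Definition invb (s : seq nat) a b := [&& a \in s, b \in s, b < a & index a s < index b s].

Lemma inversionP (s : seq nat) a b : reflect (inversion s a b) (invb s a b).
Proof. exact: and4P. Qed.

Lemma weak_le_trans (x y z : seq nat) : weak_le x y -> weak_le y z -> weak_le x z.
Proof. by move=> hxy hyz a b /hxy /hyz. Qed.

Lemma index_eq_nth (s : seq nat) v q : uniq s -> q < size s -> v \in s ->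
  (index v s == q) = (v == nth 0 s q).
Proof. by move=> us hq vs; apply/eqP/eqP=> [<-|->]; rewrite ?nth_index ?index_uniq. Qed.

Lemma inversion_nth (s : seq nat) i j : uniq s -> i < j -> j < size s ->
  inversion s (nth 0 s i) (nth 0 s j) <-> nth 0 s j < nth 0 s i.
Proof.
move=> us hij hj; have hi := ltn_trans hij hj.
by split=> [[]|hji] //; split; rewrite ?mem_nth ?index_uniq.
Qed.

Lemma inversion_swap_adj n (s : seq nat) q a b :
  is_perm n s -> q.+1 < n -> nth 0 s q.+1 < nth 0 s q ->
  inversion (swap_adj s q) a b <->
  inversion s a b /\ (a, b) <> (nth 0 s q, nth 0 s q.+1).
Proof.
move=> hs hq hdesc; have us := is_perm_uniq hs.
have hq' : q.+1 < size s by rewrite (is_perm_size hs).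
rewrite /inversion !(perm_mem (perm_swap_adj hq')) !index_swap_adj //.
split=> [[ha hb hba hab]|[[ha hb hba hab] hne]].
- have hnot_up : (index a s, index b s) != (q, q.+1).
    by apply: contraTneq hab => -[-> ->]; case: adj_transpP; case: adj_transpP; lia.
  have hnot_down : (index a s, index b s) != (q.+1, q).
    by rewrite xpair_eqE !index_eq_nth //; lia.
  rewrite adj_transp_lt // in hab; split=> // -[ea eb].
  by move: hnot_up; rewrite ea eb !index_uniq ?eqxx // ltnW.
- split=> //; rewrite adj_transp_lt // xpair_eqE.
    rewrite !index_eq_nth //; try lia.
    by apply/negP=> /andP[/eqP ea /eqP eb]; apply: hne; rewrite ea eb.
  by apply/negP=> /andP[/eqP ea /eqP eb]; move: hab; rewrite ea eb; lia.
Qed.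

Lemma weak_le_swap_adj n (s : seq nat) q :
  is_perm n s -> q.+1 < n -> nth 0 s q.+1 < nth 0 s q -> weak_le (swap_adj s q) s.
Proof. by move=> hs hq hdesc a b /(inversion_swap_adj _ _ hs hq hdesc) []. Qed.

Definition inv_count n (s : seq nat) :=
  #|[set ab : 'I_n.+1 * 'I_n.+1 | invb s ab.1 ab.2]|.

Lemma inv_count_lt n (s t : seq nat) a b : is_perm n s ->
  weak_le t s -> inversion s a b -> ~ inversion t a b -> inv_count n t < inv_count n s.
Proof.
move=> hs hts hab hnab; apply/proper_card/properP; split.
  by apply/subsetP=> -[u v]; rewrite !inE => /inversionP/hts/inversionP.
have [ha hb _ _] := hab.
have ha' : a < n.+1 by move: ha; rewrite (is_perm_mem _ hs); lia.
have hb' : b < n.+1 by move: hb; rewrite (is_perm_mem _ hs); lia.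
by exists (Ordinal ha', Ordinal hb'); rewrite !inE /=; apply/inversionP.
Qed.

Lemma inv_count_swap_adj n (s : seq nat) q :
  is_perm n s -> q.+1 < n -> nth 0 s q.+1 < nth 0 s q ->
  inv_count n (swap_adj s q) < inv_count n s.
Proof.
move=> hs hq hdesc; have hq' : q.+1 < size s by rewrite (is_perm_size hs).
apply: (inv_count_lt hs (weak_le_swap_adj hs hq hdesc)).
  exact/(inversion_nth (is_perm_uniq hs) (ltnSn q) hq').
by case/(inversion_swap_adj _ _ hs hq hdesc).
Qed.

Lemma weak_le_index n (x y : seq nat) a b : is_perm n x -> is_perm n y ->
  weak_le x y -> a \in x -> b \in x -> a < b ->
  index a y < index b y -> index a x < index b x.
Proof.
move=> hx hy hxy ha hb hab hy_ab.
have := index_inj_neq ha hb (negbT (ltn_eqF hab)); rewrite neq_ltn => /orP[//|hba].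
by have [_ _ _] := hxy _ _ (And4 hb ha hab hba); lia.
Qed.

Lemma weak_le_anti n (x y : seq nat) : is_perm n x -> is_perm n y ->
  weak_le x y -> weak_le y x -> x = y.
Proof.
move=> hx hy hxy hyx; have ux := is_perm_uniq hx; have exy := is_perm_memE hx hy.
apply: (@irr_sorted_eq _ (fun a b => index a y < index b y)) => //.
- by move=> ? ? ? /=; lia.
- by move=> ? /=; lia.
- apply/(sortedP 0)=> i hi.
  have hu : nth 0 x i \in x by rewrite mem_nth // ltnW.
  have hw : nth 0 x i.+1 \in x by rewrite mem_nth.
  case: (ltngtP (nth 0 x i.+1) (nth 0 x i)) => h.
  + by case: (hxy _ _ (proj2 (inversion_nth ux (ltnSn i) hi) h)).
  + apply: (weak_le_index hy hx hyx); rewrite -?exy //.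
    by rewrite !index_uniq // ltnW.
  + by move/eqP: h; rewrite nth_uniq ?(ltnW hi) // (gtn_eqF (ltnSn i)).
- by apply/(sortedP 0)=> i hi; rewrite !index_uniq ?(is_perm_uniq hy) ?(ltnW hi).
Qed.

Lemma descents_inversions_weak_le n (x y : seq nat) :
  is_perm n x -> is_perm n y -> weak_le x y ->
  (forall r, r.+1 < n -> nth 0 y r.+1 < nth 0 y r ->
     inversion x (nth 0 y r) (nth 0 y r.+1)) ->
  weak_le y x.
Proof.
move=> hx hy hxy hdesc; have uy := is_perm_uniq hy; have sy := is_perm_size hy.
have exy := is_perm_memE hx hy.
have in_x i : i < n -> nth 0 y i \in x by move=> hi; rewrite exy mem_nth ?sy.
pose before i j := index (nth 0 y i) x < index (nth 0 y j) x.
have adjacent i : i.+1 < n -> before i i.+1.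
  move=> hi; case: (ltngtP (nth 0 y i.+1) (nth 0 y i)) => h.
  - by case: (hdesc i hi h).
  - apply: (weak_le_index hx hy hxy); rewrite ?in_x //; try lia.
    by rewrite !index_uniq ?sy //; lia.
  - by move/eqP: h; rewrite nth_uniq ?sy //; lia.
have chain i j : i < j -> j < n -> before i j.
  elim: j => // j IH hij hj; have [->|nij] := eqVneq i j; first exact: adjacent.
  by apply: ltn_trans (IH _ (ltnW hj)) (adjacent j hj); lia.
move=> a b [ha hb hba hab].
have ib : index b y < n by rewrite -sy index_mem.
by split; rewrite ?exy //; have := chain _ _ hab ib; rewrite /before !nth_index.
Qed.

Lemma exists_descent_noninversion n (x y : seq nat) :
  is_perm n x -> is_perm n y -> weak_le x y -> x <> y ->
  exists r, [/\ r.+1 < n, nth 0 y r.+1 < nth 0 y r &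
                ~ inversion x (nth 0 y r) (nth 0 y r.+1)].
Proof.
move=> hx hy hxy nxy; apply: NNPP => hno; apply: nxy.
apply: (weak_le_anti hx hy hxy (descents_inversions_weak_le hx hy hxy _)) => r hr hdesc.
by apply: NNPP => hninv; apply: hno; exists r.
Qed.

Lemma index_rev (s : seq nat) v : uniq s -> v \in s ->
  index v (rev s) = size s - (index v s).+1.
Proof.
move=> us vs; have hi : index v s < size s by rewrite index_mem.
have e : nth 0 (rev s) (size s - (index v s).+1) = v.
  by rewrite nth_rev; [rewrite (_ : size s - _ = index v s) ?nth_index //|]; lia.
by rewrite -{1}e index_uniq ?rev_uniq ?size_rev // ltn_subrL (leq_ltn_trans _ hi).
Qed.

Lemma inversion_rev n (s : seq nat) a b : is_perm n s ->
  inversion (rev s) a b <-> [/\ a \in s, b \in s, b < a & index b s < index a s].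
Proof.
move=> hs; have us := is_perm_uniq hs; rewrite /inversion !mem_rev.
split=> -[ha hb hba hab]; split=> //; move: hab; rewrite !index_rev //;
  by have := index_mem a s; have := index_mem b s; rewrite ha hb /=; lia.
Qed.

Lemma weak_le_rev n (x y : seq nat) : is_perm n x -> is_perm n y ->
  weak_le (rev x) (rev y) <-> weak_le y x.
Proof.
move=> hx hy; have exy := is_perm_memE hx hy.
split=> h a b.
- case=> ha hb hba hab; rewrite -!exy in ha hb; split=> //.
  have := index_inj_neq ha hb (negbT (gtn_eqF hba)); rewrite neq_ltn => /orP[//|hba_x].
  have /h/(inversion_rev _ _ hy) [_ _ _] : inversion (rev x) a b.
    exact/(inversion_rev _ _ hx).
  lia.
- case/(inversion_rev _ _ hx) => ha hb hba hab; rewrite !exy in ha hb.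
  apply/(inversion_rev _ _ hy); split=> //.
  have := index_inj_neq hb ha (negbT (ltn_eqF hba)); rewrite neq_ltn => /orP[//|hab_y].
  by have [_ _ _] := h a b (And4 ha hb hba hab_y); lia.
Qed.

Lemma inv_count_ind n (Q : seq nat -> Prop) :
  (forall s, (forall t, inv_count n t < inv_count n s -> Q t) -> Q s) -> forall s, Q s.
Proof.
move=> IH s; move: {2}(inv_count n s) (leqnn (inv_count n s)) => m.
elim: m s => [|m IHm] s hm; apply: IH => t ht; last apply: IHm; lia.
Qed.

Lemma index_cat_window (L w R : seq nat) v j : v \notin w -> j <= size w ->
  (index v (L ++ w ++ R) < size L + j) = (v \in L).
Proof.
move=> vw hj; rewrite index_cat; case: ifP => vL.
  by have := index_mem v L; rewrite vL /=; lia.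
by rewrite index_cat (negbTE vw) /=; lia.
Qed.

(* [K s q] says that the descent at positions q, q+1 of s may be swapped. *)
Definition widening_closed n (K : seq nat -> nat -> Prop) :=
  forall s s' q q', is_perm n s -> is_perm n s' -> q.+1 < n -> q'.+1 < n ->
    nth 0 s q.+1 < nth 0 s q -> nth 0 s' q'.+1 <= nth 0 s q.+1 ->
    nth 0 s q <= nth 0 s' q' ->
    (forall v, nth 0 s q.+1 < v < nth 0 s q -> (index v s < q) = (index v s' < q')) ->
    K s q -> K s' q'.

Section SwapRewriting.

Variables (n : nat) (K : seq nat -> nat -> Prop).
Hypothesis closedK : widening_closed n K.

Definition swap_step (s t : seq nat) := is_perm n s /\
  exists q, [/\ q.+1 < n, nth 0 s q.+1 < nth 0 s q, K s q & t = swap_adj s q].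

Inductive swap_star : seq nat -> seq nat -> Prop :=
  | swap_star_refl s : swap_star s s
  | swap_star_step s t u : swap_step s t -> swap_star t u -> swap_star s u.

Definition irreducible s := forall t, ~ swap_step s t.

Definition normal_form s u := swap_star s u /\ irreducible u.

Lemma swap_step_perm s t : swap_step s t -> is_perm n t.
Proof. by case=> hs [q [hq _ _ ->]]; apply: is_perm_swap_adj. Qed.

Lemma swap_star_perm s t : is_perm n s -> swap_star s t -> is_perm n t.
Proof. by move=> hs h; elim: h hs => // s0 t0 u0 /swap_step_perm ht _ IH _; apply: IH. Qed.

Lemma swap_step_inv_count s t : swap_step s t -> inv_count n t < inv_count n s.
Proof. by case=> hs [q [hq hdesc _ ->]]; apply: inv_count_swap_adj. Qed.

Lemma swap_star_trans s t u : swap_star s t -> swap_star t u -> swap_star s u.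
Proof. by elim=> // s0 t0 u0 h _ IH /IH; apply: swap_star_step. Qed.

Lemma swap_star1 s t : swap_step s t -> swap_star s t.
Proof. by move=> h; apply: swap_star_step h (swap_star_refl _). Qed.

Lemma swap_step_weak_le s t : swap_step s t -> weak_le t s.
Proof. by case=> hs [q [hq hdesc _ ->]]; exact: weak_le_swap_adj hs hq hdesc. Qed.

Lemma swap_star_weak_le s t : swap_star s t -> weak_le t s.
Proof.
elim=> [s0 a b //|s0 t0 u0 st _ IH].
exact: weak_le_trans IH (swap_step_weak_le st).
Qed.

Lemma swap_star_inv_count_le s t : swap_star s t -> inv_count n t <= inv_count n s.
Proof. by elim=> // s0 t0 u0 /swap_step_inv_count; lia. Qed.

Lemma swap_star_inv_count s t : swap_star s t -> s <> t -> inv_count n t < inv_count n s.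
Proof.
case=> [//|s0 t0 u0 st h _]; have := swap_step_inv_count st.
by have := swap_star_inv_count_le h; lia.
Qed.

Lemma swap_step_widen s s' q q' : is_perm n s -> is_perm n s' -> q.+1 < n -> q'.+1 < n ->
  nth 0 s q.+1 < nth 0 s q -> nth 0 s' q'.+1 <= nth 0 s q.+1 ->
  nth 0 s q <= nth 0 s' q' ->
  (forall v, nth 0 s q.+1 < v < nth 0 s q -> (index v s < q) = (index v s' < q')) ->
  K s q -> swap_step s' (swap_adj s' q').
Proof.
move=> hs hs' hq hq' hdesc hlo hhi hside k; split=> //; exists q'; split=> //; first lia.
exact: closedK hs hs' hq hq' hdesc hlo hhi hside k.
Qed.

Lemma swap_step_far s q r : is_perm n s -> q.+1 < n -> r.+1 < n ->
  (r.+1 < q) || (q.+1 < r) -> nth 0 s q.+1 < nth 0 s q -> K s q ->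
  swap_step (swap_adj s r) (swap_adj (swap_adj s r) q).
Proof.
move=> hs hq hr hrq hdesc k; have sz := is_perm_size hs.
have hr' : r.+1 < size s by rewrite sz.
have nth_far j : j \in [:: q; q.+1] -> nth 0 (swap_adj s r) j = nth 0 s j.
  by rewrite !inE => hj; rewrite nth_swap_adj //; case: adj_transpP; lia.
apply: (swap_step_widen hs (is_perm_swap_adj hs hr) hq hq hdesc _ _ _ k);
  rewrite ?nth_far ?inE ?eqxx ?orbT //.
move=> v _; rewrite index_swap_adj ?(is_perm_uniq hs) //; case: adj_transpP; lia.
Qed.

Lemma swap_step_window L w w' R j j' :
  is_perm n (L ++ w ++ R) -> perm_eq w' w ->
  j.+1 < size w -> j'.+1 < size w ->
  nth 0 w j.+1 < nth 0 w j -> nth 0 w' j'.+1 <= nth 0 w j.+1 -> nth 0 w j <= nth 0 w' j' ->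
  (forall v, nth 0 w j.+1 < v < nth 0 w j -> v \notin w) ->
  K (L ++ w ++ R) (size L + j) ->
  swap_step (L ++ w' ++ R) (L ++ swap_adj w' j' ++ R).
Proof.
move=> hs hw hj hj' hdesc hlo hhi hout k.
have hs' : is_perm n (L ++ w' ++ R) by apply: perm_trans hs; rewrite perm_cat2l perm_cat2r.
have szw' := perm_size hw.
have sz : size L + size w + size R = n by rewrite -(is_perm_size hs) !size_cat addnA.
rewrite -swap_adj_cat ?szw' //.
apply: (swap_step_widen hs hs' _ _ _ _ _ _ k);
  rewrite -?addnS ?nth_cat_window ?szw' ?(ltnW hj) ?(ltnW hj') //; try lia.
move=> v /hout vw; have vw' : v \notin w' by rewrite (perm_mem hw).
by rewrite !index_cat_window // ?szw' ltnW // ltnW.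
Qed.

Lemma swap_star_window_min_first L R x y z u v :
  is_perm n (L ++ [:: x; y; z] ++ R) -> z < y -> y < x ->
  K (L ++ [:: x; y; z] ++ R) (size L).+1 -> perm_eq [:: u; v] [:: x; y] ->
  swap_star (L ++ [:: u; v; z] ++ R) (L ++ [:: z; u; v] ++ R).
Proof.
move=> hs hzy hyx k huv; rewrite -addn1 in k.
have hu : u \in [:: x; y] by rewrite -(perm_mem huv) mem_head.
have hv : v \in [:: x; y] by rewrite -(perm_mem huv) !inE eqxx orbT.
rewrite !inE in hu hv.
have out w : z < w < y -> w \notin [:: x; y; z] by rewrite !inE; lia.
have hw1 : perm_eq [:: u; v; z] [:: x; y; z] by move: huv; rewrite -(perm_cat2r [:: z]).
have hw2 : perm_eq [:: u; z; v] [:: x; y; z].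
  by apply: perm_trans hw1; apply/permP=> p /=; lia.
have st1 : swap_step (L ++ [:: u; v; z] ++ R) (L ++ [:: u; z; v] ++ R).
  by apply: (swap_step_window (j := 1) (j' := 1) hs hw1 _ _ _ _ _ out k) => //=; lia.
have st2 : swap_step (L ++ [:: u; z; v] ++ R) (L ++ [:: z; u; v] ++ R).
  by apply: (swap_step_window (j := 1) (j' := 0) hs hw2 _ _ _ _ _ out k) => //=; lia.
exact: swap_star_step st1 (swap_star1 st2).
Qed.

Lemma swap_star_window_max_last L R x y z u v :
  is_perm n (L ++ [:: x; y; z] ++ R) -> z < y -> y < x ->
  K (L ++ [:: x; y; z] ++ R) (size L) -> perm_eq [:: u; v] [:: y; z] ->
  swap_star (L ++ [:: x; u; v] ++ R) (L ++ [:: u; v; x] ++ R).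
Proof.
move=> hs hzy hyx k huv; rewrite -[size L]addn0 in k.
have hu : u \in [:: y; z] by rewrite -(perm_mem huv) mem_head.
have hv : v \in [:: y; z] by rewrite -(perm_mem huv) !inE eqxx orbT.
rewrite !inE in hu hv.
have out w : y < w < x -> w \notin [:: x; y; z] by rewrite !inE; lia.
have hw1 : perm_eq [:: x; u; v] [:: x; y; z] by rewrite perm_cons.
have hw2 : perm_eq [:: u; x; v] [:: x; y; z].
  by apply: perm_trans hw1; apply/permP=> p /=; lia.
have st1 : swap_step (L ++ [:: x; u; v] ++ R) (L ++ [:: u; x; v] ++ R).
  by apply: (swap_step_window (j := 0) (j' := 0) hs hw1 _ _ _ _ _ out k) => //=; lia.
have st2 : swap_step (L ++ [:: u; x; v] ++ R) (L ++ [:: u; v; x] ++ R).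
  by apply: (swap_step_window (j := 0) (j' := 1) hs hw2 _ _ _ _ _ out k) => //=; lia.
exact: swap_star_step st1 (swap_star1 st2).
Qed.

Lemma swap_step_local_confluence s t1 t2 : swap_step s t1 -> swap_step s t2 ->
  exists u, swap_star t1 u /\ swap_star t2 u.
Proof.
have far q r : is_perm n s -> q.+1 < n -> r.+1 < n -> q.+1 < r ->
    nth 0 s q.+1 < nth 0 s q -> nth 0 s r.+1 < nth 0 s r -> K s q -> K s r ->
    exists u, swap_star (swap_adj s q) u /\ swap_star (swap_adj s r) u.
  move=> hs hq hr hqr dq dr kq kr; exists (swap_adj (swap_adj s q) r); split.
    by apply: swap_star1 (swap_step_far hs hr hq _ dr kr); rewrite hqr.
  rewrite swap_adjC ?(is_perm_size hs) //.
  by apply: swap_star1 (swap_step_far hs hq hr _ dq kq); rewrite hqr orbT.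
have adjacent q : is_perm n s -> q.+2 < n ->
    nth 0 s q.+1 < nth 0 s q -> nth 0 s q.+2 < nth 0 s q.+1 -> K s q -> K s q.+1 ->
    exists u, swap_star (swap_adj s q) u /\ swap_star (swap_adj s q.+1) u.
  move=> hs hq dq dr kq kr; have hq' : q.+2 < size s by rewrite (is_perm_size hs).
  have [L [R [x [y [z [es hL ex ey ez]]]]]] := window3 hq'.
  rewrite ex ey ez in dq dr; subst s q; rewrite swap_adj_cat3l swap_adj_cat3r.
  exists (L ++ [:: z; y; x] ++ R); split.
    exact: swap_star_window_min_first hs dr dq kr (permEl (perm_catC [:: y] [:: x])).
  exact: swap_star_window_max_last hs dr dq kq (permEl (perm_catC [:: z] [:: y])).
case=> hs [q [hq dq kq ->]] [_ [r [hr dr kr ->]]].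
case: (ltngtP q r) => [hqr|hrq|<-]; last by exists (swap_adj s q); split; constructor.
- have [er|ne] := eqVneq r q.+1; first by subst r; apply: adjacent.
  by apply: far => //; lia.
- have [eq|ne] := eqVneq q r.+1.
    by subst q; have [u [h1 h2]] := adjacent r hs hq dr dq kr kq; exists u.
  have [|u [h1 h2]] := far r q hs hr hq _ dr dq kr kq; first lia.
  by exists u.
Qed.

Lemma swap_star_inv s u : swap_star s u -> s = u \/ exists2 t, swap_step s t & swap_star t u.
Proof. by case=> [s0|s0 t u0 st h]; [left | right; exists t]. Qed.

Lemma normal_form_exists s : is_perm n s -> exists u, normal_form s u.
Proof.
elim/(inv_count_ind (n := n)): s => s IH hs.
case: (classic (exists t, swap_step s t)) => [[t st]|hirr].
  have [u [h1 h2]] := IH t (swap_step_inv_count st) (swap_step_perm st).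
  by exists u; split=> //; apply: swap_star_step st h1.
by exists s; split=> [|t st]; [constructor | apply: hirr; exists t].
Qed.

Lemma normal_form_unique s u1 u2 : is_perm n s ->
  normal_form s u1 -> normal_form s u2 -> u1 = u2.
Proof.
elim/(inv_count_ind (n := n)): s u1 u2 => s IH u1 u2 hs [h1 irr1] [h2 irr2].
case/swap_star_inv: h1 => [e|[t1 st1 h1]].
  by subst u1; case/swap_star_inv: h2 => [//|[t2 st2 _]]; case: (irr1 _ st2).
case/swap_star_inv: h2 => [e|[t2 st2 h2]]; first by subst u2; case: (irr2 _ st1).
have [w [hw1 hw2]] := swap_step_local_confluence st1 st2.
have [v [hv irrv]] := normal_form_exists (swap_star_perm (swap_step_perm st1) hw1).
rewrite (IH t1 (swap_step_inv_count st1) u1 v (swap_step_perm st1)) //;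
  last by split=> //; apply: swap_star_trans hv.
symmetry; apply: (IH t2 (swap_step_inv_count st2) u2 v (swap_step_perm st2)) => //.
by split=> //; apply: swap_star_trans hv.
Qed.

Lemma normal_form_star s t u : swap_star s t -> normal_form s u -> normal_form t u.
Proof.
elim=> // s0 t0 w st _ IH hu; apply: IH.
have [v hv] := normal_form_exists (swap_step_perm st).
suff -> : u = v by [].
apply: (normal_form_unique (proj1 st)) hu _; case: hv => h1 h2.
by split=> //; apply: swap_star_step st h1.
Qed.

Lemma normal_form_star_back s t u : swap_star s t -> normal_form t u -> normal_form s u.
Proof. by move=> h [h1 h2]; split=> //; apply: swap_star_trans h h1. Qed.

Lemma normal_form_irreducible u v : irreducible u -> normal_form u v -> v = u.
Proof. by move=> irr [/swap_star_inv [//|[t st _]] _]; case: (irr _ st). Qed.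

Lemma descent_reduction y q t : is_perm n y -> q.+1 < n ->
  nth 0 y q.+1 < nth 0 y q -> ~ K y q -> swap_step y t ->
  exists y' q', [/\ inv_count n y' < inv_count n y, q'.+1 < n,
    nth 0 y' q'.+1 < nth 0 y' q', swap_star (swap_adj y q) (swap_adj y' q')
    & swap_star y y'].
Proof.
move=> hy hq dq nkq st; have sz := is_perm_size hy.
have [_ [r [hr dr kr et]]] := st.
have hrq : r != q by apply/eqP=> e; apply: nkq; rewrite -e.
case: (boolP ((r.+1 < q) || (q.+1 < r))) => hfar.
  exists t, q; split=> //; first exact: swap_step_inv_count st.
  - by rewrite et !nth_swap_adj ?sz //; do 2!case: adj_transpP; lia.
  - have -> : swap_adj t q = swap_adj (swap_adj y q) r.
      by rewrite et; case/orP: hfar => h;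
        [rewrite swap_adjC | rewrite [RHS]swap_adjC]; rewrite ?sz.
    by apply: swap_star1 (swap_step_far hy hr hq _ dr kr); rewrite orbC.
  - exact: swap_star1.
have neq_window L R (u v w u' v' w' : nat) : u != u' ->
    L ++ [:: u; v; w] ++ R <> L ++ [:: u'; v'; w'] ++ R.
  by move=> /eqP nu /(congr1 (nth 0 ^~ (size L + 0))); rewrite !nth_cat_window.
have [er|er] : r = q.+1 \/ r.+1 = q by lia.
- subst r; have := hr; rewrite -{1}sz => /window3 [L [R [c [a [d [ey hL ec ea ed]]]]]].
  rewrite ec ea ed in dq dr; subst y q.
  have hyy' := swap_star_window_min_first hy dr dq kr (perm_refl [:: c; a]).
  exists (L ++ [:: d; c; a] ++ R), (size L).+1; split=> //.
  - by apply: swap_star_inv_count hyy' _; apply: neq_window; lia.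
  - by have [_ -> ->] := nth_cat3 L R d c a.
  - rewrite swap_adj_cat3l swap_adj_cat3r.
    exact: swap_star_window_min_first hy dr dq kr (permEl (perm_catC [:: a] [:: c])).
- subst q; have := hq; rewrite -{1}sz => /window3 [L [R [d [c [a [ey hL ed ec ea]]]]]].
  rewrite ed ec ea in dq dr; subst y r.
  have hyy' := swap_star_window_max_last hy dq dr kr (perm_refl [:: c; a]).
  exists (L ++ [:: c; a; d] ++ R), (size L); split=> //.
  - by apply: swap_star_inv_count hyy' _; apply: neq_window; lia.
  - by have [-> -> _] := nth_cat3 L R c a d.
  - rewrite swap_adj_cat3l swap_adj_cat3r.
    exact: swap_star_window_max_last hy dq dr kr (permEl (perm_catC [:: a] [:: c])).
Qed.

Lemma normal_form_swap_adj_le y q u v : is_perm n y -> q.+1 < n ->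
  nth 0 y q.+1 < nth 0 y q ->
  normal_form (swap_adj y q) u -> normal_form y v -> weak_le u v.
Proof.
elim/(inv_count_ind (n := n)): y q u v => y IH q u v hy hq dq hu hv.
case: (classic (K y q)) => kq.
  have st : swap_step y (swap_adj y q) by split=> //; exists q.
  by rewrite (normal_form_unique hy (normal_form_star_back (swap_star1 st) hu) hv).
case: (classic (irreducible y)) => irr.
  rewrite (normal_form_irreducible irr hv).
  exact: weak_le_trans (swap_star_weak_le (proj1 hu)) (weak_le_swap_adj hy hq dq).
have [t st] : exists t, swap_step y t.
  by apply: NNPP => hno; apply: irr => t st; apply: hno; exists t.
have [y' [q' [lt hq' dq' h1 h2]]] := descent_reduction hy hq dq kq st.
apply: (IH y' lt q' u v (swap_star_perm hy h2) hq' dq').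
  exact: normal_form_star h1 hu.
exact: normal_form_star h2 hv.
Qed.

Lemma normal_form_monotone x y u v : is_perm n x -> is_perm n y -> weak_le x y ->
  normal_form x u -> normal_form y v -> weak_le u v.
Proof.
move=> hx; elim/(inv_count_ind (n := n)): y v => y IH v hy hxy hu hv.
case: (classic (x = y)) => [exy|nxy].
  by subst y; rewrite (normal_form_unique hx hu hv).
have [r [hr dr ninv]] := exists_descent_noninversion hx hy hxy nxy.
have hy' := is_perm_swap_adj hy hr.
have hxy' : weak_le x (swap_adj y r).
  move=> a b h; apply/(inversion_swap_adj _ _ hy hr dr); split; first exact: hxy.
  by case=> ea eb; apply: ninv; rewrite -ea -eb.
have [w hw] := normal_form_exists hy'.
apply: weak_le_trans (IH _ (inv_count_swap_adj hy hr dr) w hy' hxy' hu hw) _.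
exact: normal_form_swap_adj_le hy hr dr hw hv.
Qed.

Lemma swap_star_gen_equiv x u : swap_star x u -> gen_equiv swap_step x u.
Proof.
elim=> [s|s t w st _ IH]; first exact: ge_refl.
exact: ge_trans (ge_step st) IH.
Qed.

(* The alternative x = y covers the reflexive case, where x need not be a
   permutation. *)
Lemma gen_equiv_normal_form x y : gen_equiv swap_step x y ->
  x = y \/ [/\ is_perm n x, is_perm n y & forall u, normal_form x u <-> normal_form y u].
Proof.
elim=> [s t st|s|s t _ IH|s t w _ IH1 _ IH2].
- right; split; [exact: (proj1 st) | exact: swap_step_perm st |] => u.
  by split; [apply: normal_form_star | apply: normal_form_star_back]; apply: swap_star1.
- by left.
- case: IH => [e|[h1 h2 h3]]; first by left.
  by right; split=> // u; rewrite h3.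
- case: IH1 => [e1|[h1 h2 h3]]; case: IH2 => [e2|[h4 h5 h6]].
  + by left; rewrite e1.
  + by right; rewrite e1; split.
  + by right; rewrite -e2; split.
  + by right; split=> // u; rewrite h3 h6.
Qed.

Lemma normal_form_gen_equiv x y u : is_perm n x -> gen_equiv swap_step x y ->
  normal_form x u -> normal_form y u.
Proof. by move=> hx /gen_equiv_normal_form [<-|[_ _ h]] // /h. Qed.

Lemma normal_form_meet_le x x' y m m' u um um' :
  is_perm n x -> is_perm n x' -> is_perm n y ->
  normal_form x u -> normal_form x' u -> is_meet n x y m -> is_meet n x' y m' ->
  normal_form m um -> normal_form m' um' -> weak_le um um'.
Proof.
move=> hx hx' hy hu hu' [hm mx my _] [hm' _ _ mlub'] hum hum'.
have hum_perm := swap_star_perm hm (proj1 hum).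
have [w hw] := normal_form_exists hy.
have um_x' : weak_le um x'.
  exact: weak_le_trans (normal_form_monotone hm hx mx hum hu) (swap_star_weak_le (proj1 hu')).
have um_y : weak_le um y.
  exact: weak_le_trans (normal_form_monotone hm hy my hum hw) (swap_star_weak_le (proj1 hw)).
have um_irr : normal_form um um by split; [constructor | exact: proj2 hum].
exact: normal_form_monotone hum_perm hm' (mlub' _ hum_perm um_x' um_y) um_irr hum'.
Qed.

Lemma gen_equiv_meet x x' y m m' : is_perm n x -> is_perm n x' -> is_perm n y ->
  gen_equiv swap_step x x' -> is_meet n x y m -> is_meet n x' y m' ->
  gen_equiv swap_step m m'.
Proof.
move=> hx hx' hy e hmeet hmeet'.
have [u hu] := normal_form_exists hx; have hu' := normal_form_gen_equiv hx e hu.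
have [hm _ _ _] := hmeet; have [hm' _ _ _] := hmeet'.
have [um hum] := normal_form_exists hm; have [um' hum'] := normal_form_exists hm'.
have e_um : um = um'.
  apply: (weak_le_anti (swap_star_perm hm (proj1 hum)) (swap_star_perm hm' (proj1 hum'))).
    exact: normal_form_meet_le hx hx' hy hu hu' hmeet hmeet' hum hum'.
  exact: normal_form_meet_le hx' hx hy hu' hu hmeet' hmeet hum' hum.
subst um'; apply: ge_trans (swap_star_gen_equiv (proj1 hum)) _.
exact: ge_sym (swap_star_gen_equiv (proj1 hum')).
Qed.

End SwapRewriting.

Lemma gen_equiv_map (R R' : seq nat -> seq nat -> Prop) (f : seq nat -> seq nat) x y :
  (forall s t, R s t -> gen_equiv R' (f s) (f t)) ->
  gen_equiv R x y -> gen_equiv R' (f x) (f y).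
Proof.
move=> hR; elim=> [s t /hR //|s|s t _|s t u _ IH1 _ IH2].
- exact: ge_refl.
- exact: ge_sym.
- exact: ge_trans IH1 IH2.
Qed.

(* Reversal turns a swap at positions q, q+1 into a swap in the opposite
   direction at positions n-q-2, n-q-1 and reverses the weak order; the
   family K is transported along it, so that joins become meets. *)
Definition dual_swaps n (K : seq nat -> nat -> Prop) s q := K (rev (swap_adj s q)) (n - q.+2).

Lemma nth_rev_swap_adj (s : seq nat) q : q.+1 < size s ->
  nth 0 (rev (swap_adj s q)) (size s - q.+2) = nth 0 s q /\
  nth 0 (rev (swap_adj s q)) (size s - q.+2).+1 = nth 0 s q.+1.
Proof.
move=> hq; rewrite !nth_rev ?size_swap_adj // ?nth_swap_adj //; try lia.
by split; congr nth; case: adj_transpP; lia.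
Qed.

Lemma index_rev_swap_adj n (s : seq nat) q v : is_perm n s -> q.+1 < n -> v \in s ->
  v != nth 0 s q -> v != nth 0 s q.+1 ->
  (index v (rev (swap_adj s q)) < n - q.+2) = ~~ (index v s < q).
Proof.
move=> hs hq vs nvq nvq1; have sz := is_perm_size hs; have us := is_perm_uniq hs.
have hq' : q.+1 < size s by rewrite sz.
have ut : uniq (swap_adj s q) by rewrite (perm_uniq (perm_swap_adj hq')).
have vt : v \in swap_adj s q by rewrite (perm_mem (perm_swap_adj hq')).
have hi : index v s < n by rewrite -sz index_mem.
have := index_neq_nth (ltnW hq') nvq; have := index_neq_nth hq' nvq1.
rewrite index_rev // size_swap_adj // index_swap_adj // sz.
by case: adj_transpP; lia.
Qed.

Lemma widening_closed_dual n K : widening_closed n K -> widening_closed n (dual_swaps n K).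
Proof.
move=> closedK s s' q q' hs hs' hq hq' dq hlo hhi hside k.
have sz := is_perm_size hs; have sz' := is_perm_size hs'.
have hqs : q.+1 < size s by rewrite sz.
have hqs' : q'.+1 < size s' by rewrite sz'.
have [e1 e2] := nth_rev_swap_adj hqs; have [e1' e2'] := nth_rev_swap_adj hqs'.
rewrite sz in e1 e2; rewrite sz' in e1' e2'.
apply: (closedK _ _ _ _ (is_perm_rev (is_perm_swap_adj hs hq))
          (is_perm_rev (is_perm_swap_adj hs' hq')) _ _ _ _ _ _ k);
  rewrite ?e1 ?e2 ?e1' ?e2' //; try lia.
move=> v hv; have vs : v \in s.
  have : nth 0 s q \in s by rewrite mem_nth // ltnW.
  have : nth 0 s q.+1 \in s by rewrite mem_nth.
  by rewrite !(is_perm_mem _ hs); lia.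
have vs' : v \in s' by rewrite -(is_perm_memE hs hs').
by rewrite !index_rev_swap_adj ?hside //; apply/eqP; lia.
Qed.

Lemma swap_step_dual_rev n K s t :
  swap_step n (dual_swaps n K) s t -> swap_step n K (rev t) (rev s).
Proof.
case=> hs [q [hq dq k ->]]; have sz := is_perm_size hs.
have hqs : q.+1 < size s by rewrite sz.
have [e1 e2] := nth_rev_swap_adj hqs; rewrite sz in e1 e2.
split; first exact/is_perm_rev/is_perm_swap_adj.
exists (n - q.+2); split=> //; first lia; first by rewrite e1 e2.
by rewrite rev_swap_adj // sz swap_adjK ?size_rev // sz; lia.
Qed.

Lemma swap_step_rev_dual n K s t : is_perm n t ->
  swap_step n K (rev t) (rev s) -> swap_step n (dual_swaps n K) s t.
Proof.
move=> ht [_ [p [hp dp k e]]]; have sz := is_perm_size ht.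
set q := n - p.+2.
have es : s = swap_adj t q.
  by rewrite -(revK s) e rev_swap_adj ?size_rev ?sz ?revK // size_rev sz; congr swap_adj; lia.
have hs : is_perm n s by rewrite es; apply: is_perm_swap_adj => //; lia.
have et : t = swap_adj s q by rewrite es swap_adjK // sz; lia.
have hqs : q.+1 < size s by rewrite (is_perm_size hs); lia.
have [e1 e2] := nth_rev_swap_adj hqs; rewrite (is_perm_size hs) -et in e1 e2.
have ep : n - q.+2 = p by lia.
split=> //; exists q; split=> //; first lia.
- by rewrite -e1 -e2 ep.
- by rewrite /dual_swaps -et ep.
Qed.

Lemma is_join_rev n x y j : is_perm n x -> is_perm n y -> is_join n x y j ->
  is_meet n (rev x) (rev y) (rev j).
Proof.
move=> hx hy [hj xj yj jlub]; split; first exact: is_perm_rev.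
- exact/(weak_le_rev hj hx).
- exact/(weak_le_rev hj hy).
move=> u hu ux uy; have hu' := is_perm_rev hu.
rewrite -(revK u) in ux uy *; apply/(weak_le_rev hu' hj).
by apply: jlub => //; [apply/(weak_le_rev hu' hx) | apply/(weak_le_rev hu' hy)].
Qed.

Lemma gen_equiv_join n K x x' y j j' : widening_closed n K ->
  is_perm n x -> is_perm n x' -> is_perm n y -> gen_equiv (swap_step n K) x x' ->
  is_join n x y j -> is_join n x' y j' -> gen_equiv (swap_step n K) j j'.
Proof.
move=> closedK hx hx' hy e hj hj'.
have rev_equiv K' K'' s t :
    (forall s t, swap_step n K' s t -> swap_step n K'' (rev t) (rev s)) ->
    gen_equiv (swap_step n K') s t -> gen_equiv (swap_step n K'') (rev s) (rev t).
  by move=> h; apply: gen_equiv_map => s0 t0 /h st; apply/ge_sym/ge_step.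
rewrite -(revK j) -(revK j'); apply: (rev_equiv (dual_swaps n K)).
  exact: swap_step_dual_rev.
apply: (gen_equiv_meet (widening_closed_dual closedK)
          (is_perm_rev hx) (is_perm_rev hx') (is_perm_rev hy) _
          (is_join_rev hx hy hj) (is_join_rev hx' hy hj')).
apply: rev_equiv e => s t st; apply: swap_step_rev_dual; last by rewrite !revK.
exact: is_perm_rev (proj1 st).
Qed.

Definition pattern_swaps (P : vpattern -> Prop) (s : seq nat) q :=
  exists p idx, [/\ P p, occurrence s p idx & nth 0 idx p.2 = q].

Section PatternWidening.

Variables (n : nat) (P : vpattern -> Prop).
Hypothesis wbP : well_behaved P.
Variables (s s' : seq nat) (q q' : nat).
Hypotheses (hs : is_perm n s) (hs' : is_perm n s') (hq : q.+1 < n) (hq' : q'.+1 < n)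
  (dq : nth 0 s q.+1 < nth 0 s q) (hlo : nth 0 s' q'.+1 <= nth 0 s q.+1)
  (hhi : nth 0 s q <= nth 0 s' q')
  (hside : forall v, nth 0 s q.+1 < v < nth 0 s q -> (index v s < q) = (index v s' < q')).
Variables (tau : seq nat) (i : nat) (idx : seq nat).
Hypotheses (Ptau : P (tau, i)) (occ : occurrence s (tau, i) idx) (idx_i : nth 0 idx i = q).

Let k := size tau.
Let val j := nth 0 s (nth 0 idx j).
Let c' := nth 0 s' q'.
Let a' := nth 0 s' q'.+1.

Lemma tau_shape : [/\ is_perm k tau, i.+1 < k, nth 0 tau i = k, nth 0 tau i.+1 = 1 &
  forall A B, perm_eq A (take i tau) -> perm_eq B (drop i.+2 tau) -> P (A ++ k :: 1 :: B, i)].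
Proof. by have [[? ?] _ ? ? ?] := wbP Ptau. Qed.

Lemma size_s : size s = n. Proof. exact: is_perm_size hs. Qed.
Lemma size_s' : size s' = n. Proof. exact: is_perm_size hs'. Qed.
Lemma lt_i1_k : i.+1 < k. Proof. by case: tau_shape. Qed.

Lemma idx_lt j : j < k -> nth 0 idx j < n.
Proof.
case: occ => hsz _ hall _ _ hj; rewrite -size_s.
by move/(all_nthP 0): hall; apply; rewrite hsz.
Qed.

Lemma idx_mono j l : j < l -> l < k -> nth 0 idx j < nth 0 idx l.
Proof.
case: occ => hsz hsort _ _ _ hjl hl; have hsz' : size idx = k by rewrite hsz.
by apply: (sorted_ltn_nth ltn_trans 0 hsort); rewrite ?inE /= ?hsz'; lia.
Qed.

Lemma idx_i1 : nth 0 idx i.+1 = q.+1.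
Proof. by case: occ => _ _ _ _ /= ->; rewrite idx_i. Qed.

Lemma val_order j l : j < k -> l < k -> (val j < val l) = (nth 0 tau j < nth 0 tau l).
Proof. by case: occ => _ _ _ hord _; apply: hord. Qed.

Lemma tau_in_range j : j < k -> 0 < nth 0 tau j <= k.
Proof. by case: tau_shape => htau _ _ _ _ hj; rewrite -(is_perm_mem _ htau) mem_nth. Qed.

Lemma tau_inj j l : j < k -> l < k -> j != l -> nth 0 tau j != nth 0 tau l.
Proof. by case: tau_shape => htau _ _ _ _ hj hl hjl; rewrite nth_uniq ?(is_perm_uniq htau). Qed.

(* The underlined pair plays the roles of k and 1. *)
Lemma val_between j : j < k -> j != i -> j != i.+1 -> nth 0 s q.+1 < val j < nth 0 s q.
Proof.
move=> hj hji hji1; have hik := lt_i1_k; case: tau_shape => _ _ ti ti1 _.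
have := tau_in_range hj; have := tau_inj hj (ltnW hik) hji; have := tau_inj hj hik hji1.
have := val_order hik hj; have := val_order hj (ltnW hik).
rewrite /val idx_i idx_i1 ti ti1; lia.
Qed.

Lemma side_val j : j < k -> j != i -> j != i.+1 -> (index (val j) s' < q') = (j < i).
Proof.
move=> hj hji hji1; have hik := lt_i1_k.
rewrite -hside ?val_between // /val index_uniq ?(is_perm_uniq hs) ?size_s ?idx_lt //.
case: (ltnP j i) => h.
  by have := idx_mono h (ltnW hik); rewrite idx_i => ->.
by have := idx_mono (_ : i.+1 < j) hj; rewrite idx_i1; lia.
Qed.

(* The values of the occurrence, with the underlined pair replaced by the
   wider descent of s'. *)
Definition vals' := mkseq (fun j => if j == i then c' else if j == i.+1 then a' else val j) k.

Lemma size_vals' : size vals' = k. Proof. by rewrite size_mkseq. Qed.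

Lemma nth_vals' j : j < k ->
  nth 0 vals' j = if j == i then c' else if j == i.+1 then a' else val j.
Proof. by move=> hj; rewrite nth_mkseq. Qed.

Lemma vals'_order j l : j < k -> l < k ->
  (nth 0 vals' j < nth 0 vals' l) = (nth 0 tau j < nth 0 tau l).
Proof.
move=> hj hl; have hik := lt_i1_k; case: tau_shape => _ _ ti ti1 _.
rewrite !nth_vals' //.
have other m : m < k -> m != i -> m != i.+1 ->
    [/\ nth 0 s q.+1 < val m < nth 0 s q, nth 0 tau m != k & nth 0 tau m != 1].
  move=> hm hmi hmi1; split; first exact: val_between.
    by rewrite -ti tau_inj // ltnW.
  by rewrite -ti1 tau_inj.
have := tau_in_range hj; have := tau_in_range hl.
case: (eqVneq j i) => [ej|nji].
  subst j; rewrite ti.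
  case: (eqVneq l i) => [->|nli]; first by rewrite ti; lia.
  case: (eqVneq l i.+1) => [->|nli1]; first by rewrite ti1; lia.
  by have [] := other l hl nli nli1; lia.
case: (eqVneq j i.+1) => [ej|nji1].
  subst j; rewrite ti1.
  case: (eqVneq l i) => [->|nli]; first by rewrite ti; lia.
  case: (eqVneq l i.+1) => [->|nli1]; first by rewrite ti1; lia.
  by have [] := other l hl nli nli1; lia.
case: (eqVneq l i) => [->|nli]; first by rewrite ti; have [] := other j hj nji nji1; lia.
case: (eqVneq l i.+1) => [->|nli1]; first by rewrite ti1; have [] := other j hj nji nji1; lia.
by move=> _ _; apply: val_order.
Qed.

Lemma uniq_vals' : uniq vals'.
Proof.
apply/(uniqP 0)=> j l; rewrite !inE size_vals' => hj hl e.
have := vals'_order hj hl; have := vals'_order hl hj; rewrite e ltnn.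
by move=> h1 h2; apply/eqP; apply: contraT => /(tau_inj hj hl); lia.
Qed.

Lemma vals'_i : nth 0 vals' i = c'.
Proof. by rewrite nth_vals' ?eqxx // ltnW // lt_i1_k. Qed.

Lemma vals'_i1 : nth 0 vals' i.+1 = a'.
Proof. by rewrite nth_vals' ?lt_i1_k // (gtn_eqF (ltnSn i)) eqxx. Qed.

Lemma vals'_other j : j < k -> j != i -> j != i.+1 -> nth 0 vals' j = val j.
Proof. by move=> hj hji hji1; rewrite nth_vals' // (negbTE hji) (negbTE hji1). Qed.

Lemma vals'_sub : {subset vals' <= s'}.
Proof.
move=> v /(nthP 0) [j]; rewrite size_vals' => hj <-.
case: (eqVneq j i) => [->|hji]; first by rewrite vals'_i mem_nth // size_s' ltnW.
case: (eqVneq j i.+1) => [->|hji1]; first by rewrite vals'_i1 mem_nth // size_s'.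
by rewrite vals'_other // -(is_perm_memE hs hs') mem_nth // size_s idx_lt.
Qed.

Lemma index_vals' v : v \in vals' ->
  (index v s' < q') = (index v vals' < i) /\
  (q'.+2 <= index v s') = (i.+2 <= index v vals').
Proof.
move=> vv; have hj : index v vals' < k by rewrite -size_vals' index_mem.
have us' := is_perm_uniq hs'; have hik := lt_i1_k.
move: hj; set j := index v vals' => hj.
have -> : v = nth 0 vals' j by rewrite nth_index.
case: (eqVneq j i) => [->|hji].
  by rewrite vals'_i index_uniq ?size_s' //; [lia | apply: ltnW].
case: (eqVneq j i.+1) => [->|hji1].
  by rewrite vals'_i1 index_uniq ?size_s' //; lia.
rewrite vals'_other //; have hsv := side_val hj hji hji1.
have vb := val_between hj hji hji1.
have hvq : index (val j) s' != q'.
  by apply: index_neq_nth; rewrite ?size_s' 1?ltnW //; apply/eqP; lia.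
have hvq1 : index (val j) s' != q'.+1.
  by apply: index_neq_nth; rewrite ?size_s' //; apply/eqP; lia.
by split=> //; lia.
Qed.

Definition std v := nth 0 tau (index v vals').

Lemma std_vals' j : j < k -> std (nth 0 vals' j) = nth 0 tau j.
Proof. by move=> hj; rewrite /std index_uniq ?uniq_vals' ?size_vals'. Qed.

Lemma std_mono v w : v \in vals' -> w \in vals' -> (v < w) = (std v < std w).
Proof.
move=> vv wv; have := index_mem v vals'; have := index_mem w vals'.
rewrite vv wv size_vals' => hw hv.
by rewrite -{1}(nth_index 0 vv) -{1}(nth_index 0 wv) vals'_order.
Qed.

Definition sub' := [seq v <- s' | v \in vals'].
Definition left' := [seq v <- take q' s' | v \in vals'].
Definition right' := [seq v <- drop q'.+2 s' | v \in vals'].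

Lemma sub'_split : sub' = left' ++ c' :: a' :: right'.
Proof.
have c'v : c' \in vals' by rewrite -vals'_i mem_nth // size_vals' ltnW // lt_i1_k.
have a'v : a' \in vals' by rewrite -vals'_i1 mem_nth // size_vals' lt_i1_k.
by rewrite /sub' {1}(cat_take_window2 (_ : q'.+1 < size s')) ?size_s' // !filter_cat /= c'v a'v.
Qed.

Lemma perm_left' : perm_eq left' (take i vals').
Proof.
apply: uniq_perm; rewrite ?filter_uniq ?take_uniq ?(is_perm_uniq hs') ?uniq_vals' // => v.
rewrite mem_filter; case vv: (v \in vals'); last by apply/esym/negP=> /mem_take; rewrite vv.
by rewrite in_take ?vals'_sub // in_take //; case: (index_vals' vv).
Qed.

Lemma perm_right' : perm_eq right' (drop i.+2 vals').
Proof.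
apply: uniq_perm; rewrite ?filter_uniq ?drop_uniq ?(is_perm_uniq hs') ?uniq_vals' // => v.
rewrite mem_filter; case vv: (v \in vals'); last by apply/esym/negP=> /mem_drop; rewrite vv.
by rewrite !in_drop_uniq ?(is_perm_uniq hs') ?uniq_vals' ?vals'_sub //; case: (index_vals' vv).
Qed.

Lemma size_left' : size left' = i.
Proof. by rewrite (perm_size perm_left') size_takel // size_vals' ltnW // ltnW // lt_i1_k. Qed.

Definition idx' := [seq p <- iota 0 n | nth 0 s' p \in vals'].
Definition tau' := map std sub'.

Lemma map_idx' : map (nth 0 s') idx' = sub'.
Proof. by rewrite /idx' -filter_map -size_s' map_nth_iota0 // take_size. Qed.

Lemma nth_idx' j : j < size idx' -> nth 0 s' (nth 0 idx' j) = nth 0 sub' j.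
Proof. by move=> hj; rewrite -map_idx' (nth_map 0). Qed.

Lemma idx'_lt j : j < size idx' -> nth 0 idx' j < n.
Proof.
by move=> hj; have := mem_nth 0 hj; rewrite mem_filter mem_iota => /andP[_ /andP[_]].
Qed.

Lemma size_idx' : size idx' = k.
Proof.
rewrite -(size_map (nth 0 s')) map_idx' sub'_split size_cat /= size_left'.
by rewrite (perm_size perm_right') size_drop size_vals'; have := lt_i1_k; lia.
Qed.

Lemma idx'_underlined : nth 0 idx' i = q' /\ nth 0 idx' i.+1 = q'.+1.
Proof.
have hik := lt_i1_k; have us' := is_perm_uniq hs'.
have pos j p : j < k -> p < n -> nth 0 sub' j = nth 0 s' p -> nth 0 idx' j = p.
  move=> hj hp e; apply/eqP; rewrite -(nth_uniq 0 _ _ us') ?size_s' ?idx'_lt ?size_idx' //.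
  by rewrite nth_idx' ?size_idx' // e.
rewrite sub'_split in pos; split; apply: pos; rewrite ?nth_cat ?size_left' ?ltnn ?subnn //;
  try lia; by rewrite ltnNge leqnSn /= subSnn.
Qed.

Lemma occurrence_idx' : occurrence s' (tau', i) idx'.
Proof.
have [e1 e2] := idx'_underlined.
split=> //=.
- by rewrite /tau' size_map -map_idx' size_map.
- by apply: sorted_filter; [exact: ltn_trans | exact: iota_ltn_sorted].
- by apply/allP=> p; rewrite mem_filter mem_iota size_s' => /andP[_]; lia.
- move=> a b; rewrite /tau' size_map => ha hb.
  have mem j : j < size sub' -> nth 0 sub' j \in vals'.
    by move=> hj; have := mem_nth 0 hj; rewrite mem_filter => /andP[].
  have hsub : size sub' = size idx' by rewrite -map_idx' size_map.
  rewrite !nth_idx' -?hsub // !(nth_map 0) //.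
  exact: std_mono (mem _ ha) (mem _ hb).
- by rewrite e1 e2.
Qed.

Lemma P_tau' : P (tau', i).
Proof.
have hik := lt_i1_k; case: tau_shape => _ _ ti ti1 closed.
have std_c' : std c' = k by rewrite -vals'_i std_vals' // ltnW.
have std_a' : std a' = 1 by rewrite -vals'_i1 std_vals'.
have map_std : map std vals' = tau.
  by rewrite /std map_index_nth ?uniq_vals' ?size_vals'.
rewrite /tau' sub'_split map_cat /= std_c' std_a'.
apply: closed; rewrite -map_std.
  by rewrite -map_take; apply: perm_map; apply: perm_left'.
by rewrite -map_drop; apply: perm_map; apply: perm_right'.
Qed.

Lemma pattern_swaps_widened : pattern_swaps P s' q'.
Proof.
exists (tau', i), idx'; split; [exact: P_tau' | exact: occurrence_idx' |].
by case: idx'_underlined.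
Qed.

End PatternWidening.

Lemma widening_closed_pattern_swaps n P : well_behaved P -> widening_closed n (pattern_swaps P).
Proof.
move=> wbP s s' q q' hs hs' hq hq' dq hlo hhi hside [[tau i] [idx [Ptau occ idx_i]]].
exact: (pattern_swaps_widened wbP hs hs' hq hq' dq hlo hhi hside Ptau occ idx_i).
Qed.

Lemma rewrite_step_swap_step n P s t : well_behaved P ->
  rewrite_step P n s t <-> swap_step n (pattern_swaps P) s t.
Proof.
move=> wbP; split; last first.
  by case=> hs [q [_ _ [p [idx [Pp occ <-]]] ->]]; split=> //; exists p, idx.
case=> hs [[tau i] [idx [Ptau occ ->]]]; split=> //.
have [[_ hik] _ ti ti1 _] := wbP _ _ Ptau.
have [hsz _ hall hord hadj] := occ; rewrite /= in hik hsz hord hadj.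
exists (nth 0 idx i); split.
- rewrite -hadj -(is_perm_size hs); move/(all_nthP 0): hall; apply; rewrite hsz //.
- by rewrite -hadj hord //= ?ti ?ti1; lia.
- by exists (tau, i), idx.
- by [].
Qed.

Lemma gen_equiv_rewrite_step n P x y : well_behaved P ->
  gen_equiv (rewrite_step P n) x y <-> gen_equiv (swap_step n (pattern_swaps P)) x y.
Proof.
by move=> wbP; split; apply: (gen_equiv_map (f := id)) => s t st;
  apply/ge_step/(rewrite_step_swap_step _ _ _ wbP).
Qed.

Lemma avoids_all_irreducible n P s : well_behaved P -> is_perm n s ->
  avoids_all P s <-> irreducible n (pattern_swaps P) s.
Proof.
move=> wbP hs; split=> [hav t [_ [q [_ _ [p [idx [Pp occ _]]] _]]]|hirr p Pp [idx occ]].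
  by apply: (hav p Pp); exists idx.
apply: (hirr (swap_adj s (nth 0 idx p.2))); apply/rewrite_step_swap_step => //.
by split=> //; exists p, idx.
Qed.

Theorem mainTheorem20 (P : vpattern -> Prop) (n : nat) :
  well_behaved P -> 1 <= n ->
  lattice_congruence n (gen_equiv (rewrite_step P n)) /\
  (forall pi, is_perm n pi ->
     exists sigma,
       [/\ is_perm n sigma,
           gen_equiv (rewrite_step P n) sigma pi,
           avoids_all P sigma,
           (forall rho, is_perm n rho -> gen_equiv (rewrite_step P n) rho pi ->
              weak_le sigma rho) &
           (forall sigma', is_perm n sigma' ->
              gen_equiv (rewrite_step P n) sigma' pi -> avoids_all P sigma' ->
              sigma' = sigma)]).
Proof.
move=> wbP _; have closedK := @widening_closed_pattern_swaps n P wbP.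
have eqR x y := @gen_equiv_rewrite_step n P x y wbP.
split.
  split=> [x _|x y _ _|x y z _ _ _|x x' y j j' hx hx' hy /eqR e hj hj'|
           x x' y m m' hx hx' hy /eqR e hm hm'].
  - exact: ge_refl.
  - exact: ge_sym.
  - exact: ge_trans.
  - exact/eqR/(gen_equiv_join closedK hx hx' hy e hj hj').
  - exact/eqR/(gen_equiv_meet closedK hx hx' hy e hm hm').
move=> pi hpi; have [sigma [hstar hirr]] := normal_form_exists (pattern_swaps P) hpi.
have hsigma := swap_star_perm hpi hstar.
have in_class rho : is_perm n rho -> gen_equiv (rewrite_step P n) rho pi ->
    normal_form n (pattern_swaps P) rho sigma.
  by move=> hrho /eqR e; exact: (normal_form_gen_equiv closedK hpi (ge_sym e) (conj hstar hirr)).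
exists sigma; split=> //.
- by apply/eqR/ge_sym/swap_star_gen_equiv.
- exact/(avoids_all_irreducible wbP hsigma).
- by move=> rho hrho /(in_class _ hrho) [/swap_star_weak_le].
- move=> sigma' hsigma' e /(avoids_all_irreducible wbP hsigma') hirr'.
  by rewrite (normal_form_irreducible hirr' (in_class _ hsigma' e)).
Qed.
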